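(* Let $P,P'\subset\mathbb R^2$ be two open bounded convex polygons and $Q$ the convex hull of $P\cup P'$. If $x_c$ is a vertex of $P$ such that $d(x_c,P')=d_H(P,P')$, then $x_c$ is a vertex of $Q$. If the angle of $P$ at $x_c$ is $\alpha$, then the angle of $Q$ at $x_c$ is at most $(\alpha+\pi)/2<\pi$.
   Context: $d_H(P,P')=\max(\sup_{x\in P}d(x,P'),\sup_{x'\in P'}d(x',P))$ is the Hausdorff distance. *)

From Stdlib Require Import Reals List.
Open Scope R_scope.

Definition pt := (R * R)%type.

Definition edist (x y : pt) : R :=
  sqrt ((fst x - fst y) ^ 2 + (snd x - snd y) ^ 2).

(* Convex hull: the set of all finite convex combinations of points of S.
   A combination is a list of (weight, point) pairs. *)
Definition conv_hull (S : pt -> Prop) (x : pt) : Prop :=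
  exists l : list (R * pt),
    Forall (fun p => 0 <= fst p /\ S (snd p)) l /\
    fold_right (fun p acc => fst p + acc) 0 l = 1 /\
    x = (fold_right (fun p acc => fst p * fst (snd p) + acc) 0 l,
         fold_right (fun p acc => fst p * snd (snd p) + acc) 0 l).

Definition interior (S : pt -> Prop) (x : pt) : Prop :=
  exists e, 0 < e /\ forall y, edist x y < e -> S y.

Definition closure (S : pt -> Prop) (x : pt) : Prop :=
  forall e, 0 < e -> exists y, S y /\ edist x y < e.

(* An open bounded convex polygon: the (nonempty) interior of the convex hull
   of finitely many points.  Boundedness is automatic. *)
Definition open_convex_polygon (P : pt -> Prop) : Prop :=
  (exists V : list pt,
     forall x, P x <-> interior (conv_hull (fun v => In v V)) x) /\
  (exists x, P x).

(* Vertex of a convex set K: an extreme point of its closure. *)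
Definition is_vertex (K : pt -> Prop) (v : pt) : Prop :=
  closure K v /\
  forall a b t, closure K a -> closure K b -> 0 < t < 1 ->
    v = (fst a + t * (fst b - fst a), snd a + t * (snd b - snd a)) ->
    a = v /\ b = v.

Definition is_inf (E : R -> Prop) (r : R) : Prop :=
  (forall y, E y -> r <= y) /\
  (forall r', (forall y, E y -> r' <= y) -> r' <= r).

Definition dist_to (x : pt) (S : pt -> Prop) (r : R) : Prop :=
  is_inf (fun d => exists y, S y /\ d = edist x y) r.

Definition hausdorff (P P' : pt -> Prop) (h : R) : Prop :=
  exists s1 s2,
    is_lub (fun r => exists x, P x /\ dist_to x P' r) s1 /\
    is_lub (fun r => exists x', P' x' /\ dist_to x' P r) s2 /\
    h = Rmax s1 s2.

Definition vec_angle (u w : pt) : R :=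
  acos ((fst u * fst w + snd u * snd w) /
        (sqrt (fst u ^ 2 + snd u ^ 2) * sqrt (fst w ^ 2 + snd w ^ 2))).

(* The angle of the convex set K at the point v (a vertex):
   the supremum of the angles a - v, b - v for a, b in the closure of K
   distinct from v (the opening angle of the tangent cone at v). *)
Definition angle_at (K : pt -> Prop) (v : pt) (alpha : R) : Prop :=
  is_lub (fun th => exists a b, closure K a /\ closure K b /\ a <> v /\ b <> v /\
            th = vec_angle (fst a - fst v, snd a - snd v)
                           (fst b - fst v, snd b - snd v)) alpha.

From Pilot Require Import Defs.
From Stdlib Require Import Reals List Lra Psatz Classical ClassicalEpsilon.
Open Scope R_scope.

(* Choose a unit vector u with u.(x - xc) >= 0 on P and u.(z - xc) >= h on P':
   when h > 0 it points from xc to the point of the closure of P' nearest to xc,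
   when h = 0 it is a supporting direction of P at its vertex xc.
   Measure angles at xc from u.  If n is the inner unit normal of an edge of P
   at xc, then n.(z - xc) >= -h on P', because every point of P' is within h of
   P; hence u + n, a positive multiple of the bisector of u and n, is
   nonnegative on P and on P', hence on their convex hull Q.  The two bisectors
   confine Q to a sector at xc of opening (alpha + PI) / 2 < PI, which bounds
   the angle of Q at xc and makes xc an extreme point of the closure of Q. *)

(** * Vectors in the plane *)

Definition dot (a b : pt) : R := fst a * fst b + snd a * snd b.
Definition cross (a b : pt) : R := fst a * snd b - snd a * fst b.
Definition sqnorm (w : pt) : R := fst w ^ 2 + snd w ^ 2.
Definition vsub (x v : pt) : pt := (fst x - fst v, snd x - snd v).
Definition scale (k : R) (w : pt) : pt := (k * fst w, k * snd w).
Definition seg (a b : pt) (t : R) : pt :=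
  (fst a + t * (fst b - fst a), snd a + t * (snd b - snd a)).

Lemma sqnorm_nonneg w : 0 <= sqnorm w.
Proof. unfold sqnorm; pose proof (pow2_ge_0 (fst w)); pose proof (pow2_ge_0 (snd w)); lra. Qed.

Lemma sqnorm_vsub_pos x v : x <> v -> 0 < sqnorm (vsub x v).
Proof.
  intros Hxv. destruct (Rlt_or_le 0 (sqnorm (vsub x v))) as [|Hle]; auto.
  exfalso; apply Hxv. unfold sqnorm, vsub in Hle; cbn [fst snd] in Hle.
  pose proof (pow2_ge_0 (fst x - fst v)); pose proof (pow2_ge_0 (snd x - snd v)).
  assert (fst x - fst v = 0) by (apply Rsqr_0_uniq; unfold Rsqr; simpl in *; lra).
  assert (snd x - snd v = 0) by (apply Rsqr_0_uniq; unfold Rsqr; simpl in *; lra).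
  destruct x, v; cbn in *; f_equal; lra.
Qed.

Lemma sqnorm_scale k w : sqnorm (scale k w) = k * k * sqnorm w.
Proof. unfold sqnorm, scale; cbn [fst snd]; ring. Qed.

Lemma dot_vsub g x v : dot g (vsub x v) = dot g x - dot g v.
Proof. unfold dot, vsub; cbn [fst snd]; ring. Qed.

Lemma lagrange_identity a b : sqnorm a * sqnorm b = dot a b ^ 2 + cross a b ^ 2.
Proof. unfold sqnorm, dot, cross; ring. Qed.

Lemma dot_cross_frame u w w' :
  dot u w * dot u w' + cross u w * cross u w' = sqnorm u * dot w w'.
Proof. unfold sqnorm, dot, cross; ring. Qed.

Lemma edist_sqnorm x y : edist x y = sqrt (sqnorm (vsub x y)).
Proof. reflexivity. Qed.

Lemma edist_nonneg x y : 0 <= edist x y.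
Proof. apply sqrt_pos. Qed.

Lemma edist_sqr x y : edist x y * edist x y = sqnorm (vsub x y).
Proof. apply sqrt_sqrt, sqnorm_nonneg. Qed.

Lemma edist_sym x y : edist x y = edist y x.
Proof. rewrite !edist_sqnorm; f_equal; unfold sqnorm, vsub; cbn [fst snd]; ring. Qed.

Lemma edist_refl x : edist x x = 0.
Proof.
  rewrite edist_sqnorm, <- sqrt_0. f_equal. unfold sqnorm, vsub; cbn [fst snd]; ring.
Qed.

Lemma edist_scale a b c d k : 0 <= k -> vsub a b = scale k (vsub c d) ->
  edist a b = k * edist c d.
Proof.
  intros Hk E. rewrite !edist_sqnorm, E, sqnorm_scale, sqrt_mult, sqrt_square; auto.
  - nra.
  - apply sqnorm_nonneg.
Qed.

Lemma dot_le_edist g x y : dot g (vsub x y) <= sqrt (sqnorm g) * edist x y.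
Proof.
  apply Rsqr_incr_0_var.
  - rewrite edist_sqnorm, <- sqrt_mult, Rsqr_sqrt by
      (apply sqnorm_nonneg || apply Rmult_le_pos; apply sqnorm_nonneg).
    rewrite lagrange_identity. pose proof (pow2_ge_0 (cross g (vsub x y))).
    unfold Rsqr; simpl in *; lra.
  - apply Rmult_le_pos; [apply sqrt_pos | apply edist_nonneg].
Qed.

Lemma unit_dot_le_edist u x y : sqnorm u = 1 -> dot u (vsub x y) <= edist x y.
Proof. intros Hu. pose proof (dot_le_edist u x y) as CS. rewrite Hu, sqrt_1 in CS. lra. Qed.

(** * Convex hulls and half-planes *)

Definition wsum (f : pt -> R) (l : list (R * pt)) : R :=
  fold_right (fun p acc => fst p * f (snd p) + acc) 0 l.

Definition scale_weights (t : R) (l : list (R * pt)) : list (R * pt) :=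
  map (fun p => (t * fst p, snd p)) l.

Lemma wsum_one l : fold_right (fun p acc => fst p + acc) 0 l = wsum (fun _ => 1) l.
Proof. unfold wsum; induction l as [|p l IH]; cbn; [|rewrite IH]; ring. Qed.

Lemma conv_hull_wsum S x : conv_hull S x <-> exists l,
  Forall (fun p => 0 <= fst p /\ S (snd p)) l /\
  wsum (fun _ => 1) l = 1 /\ x = (wsum fst l, wsum snd l).
Proof. unfold conv_hull. setoid_rewrite wsum_one. reflexivity. Qed.

Lemma wsum_app f l1 l2 : wsum f (l1 ++ l2) = wsum f l1 + wsum f l2.
Proof. unfold wsum; induction l1 as [|p l IH]; cbn; [|rewrite IH]; ring. Qed.

Lemma wsum_scale_weights f t l : wsum f (scale_weights t l) = t * wsum f l.
Proof. unfold wsum, scale_weights; induction l as [|p l IH]; cbn; [|rewrite IH]; ring. Qed.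

Lemma wsum_dot g l : dot g (wsum fst l, wsum snd l) = wsum (dot g) l.
Proof. unfold wsum, dot in *; induction l as [|p l IH]; cbn in *; [|rewrite <- IH]; ring. Qed.

Lemma wsum_ge f c l : Forall (fun p => 0 <= fst p /\ c <= f (snd p)) l ->
  c * wsum (fun _ => 1) l <= wsum f l.
Proof.
  unfold wsum; induction 1 as [|[w p] l [Hw Hp] _ IH]; cbn in *; nra.
Qed.

Lemma conv_hull_single (S : pt -> Prop) x : S x -> conv_hull S x.
Proof.
  intros Hx. apply conv_hull_wsum. exists ((1, x) :: nil). cbn.
  split; [repeat constructor; cbn; auto; lra|]. split; [ring|].
  destruct x; cbn; f_equal; ring.
Qed.

Lemma conv_hull_seg S a b t : conv_hull S a -> conv_hull S b -> 0 <= t <= 1 ->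
  conv_hull S (seg a b t).
Proof.
  rewrite !conv_hull_wsum. intros [la [Fa [Wa ->]]] [lb [Fb [Wb ->]]] Ht.
  exists (scale_weights (1 - t) la ++ scale_weights t lb). split; [|split].
  - apply Forall_app; split; apply Forall_map;
      [eapply Forall_impl; [|exact Fa] | eapply Forall_impl; [|exact Fb]];
      intros [w p] [Hw Hp]; cbn in *; split; auto; nra.
  - rewrite wsum_app, !wsum_scale_weights, Wa, Wb; ring.
  - rewrite !wsum_app, !wsum_scale_weights. unfold seg; cbn; f_equal; ring.
Qed.

Lemma conv_hull_halfplane S g c v :
  (forall x, S x -> c <= dot g (vsub x v)) ->
  forall x, conv_hull S x -> c <= dot g (vsub x v).
Proof.
  intros H x Hx. apply conv_hull_wsum in Hx as [l [F [W ->]]].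
  rewrite dot_vsub, wsum_dot.
  assert (Hge : (c + dot g v) * wsum (fun _ => 1) l <= wsum (dot g) l).
  { apply wsum_ge. eapply Forall_impl; [|exact F]. intros p [Hw Hp].
    split; auto. specialize (H _ Hp). rewrite dot_vsub in H. lra. }
  rewrite W in Hge. lra.
Qed.

Lemma closure_halfplane S g c v :
  (forall x, S x -> c <= dot g (vsub x v)) ->
  forall x, closure S x -> c <= dot g (vsub x v).
Proof.
  intros H x Hx. apply Rnot_lt_le. intros Hlt.
  set (G := sqrt (sqnorm g)). assert (HG : 0 <= G) by apply sqrt_pos.
  destruct (Hx ((c - dot g (vsub x v)) / (G + 1))) as [y [Sy Dy]].
  { apply Rdiv_lt_0_compat; lra. }
  pose proof (H y Sy) as Hy. pose proof (dot_le_edist g y x) as CS. fold G in CS.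
  rewrite edist_sym in Dy.
  assert (Hd : (G + 1) * edist y x < c - dot g (vsub x v)).
  { apply (Rmult_lt_compat_l (G + 1)) in Dy; [|lra].
    replace ((G + 1) * ((c - dot g (vsub x v)) / (G + 1))) with (c - dot g (vsub x v)) in Dy
      by (field; lra).
    exact Dy. }
  assert (E : dot g (vsub y v) = dot g (vsub x v) + dot g (vsub y x))
    by (rewrite !dot_vsub; ring).
  pose proof (edist_nonneg y x). nra.
Qed.

Lemma interior_incl S x : Defs.interior S x -> S x.
Proof. intros [e [He H]]. apply H. rewrite edist_refl; auto. Qed.

Lemma closure_incl (S : pt -> Prop) x : S x -> closure S x.
Proof. intros H e He. exists x. rewrite edist_refl; auto. Qed.

Lemma closure_mono (S T : pt -> Prop) :
  (forall x, S x -> T x) -> forall x, closure S x -> closure T x.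
Proof. intros H x Hx e He. destruct (Hx e He) as [y [Sy D]]. eauto. Qed.

(** * Polar angles *)

Definition polar_arg (x y : R) : R :=
  if Rle_dec 0 y then acos (x / sqrt (x ^ 2 + y ^ 2))
  else - acos (x / sqrt (x ^ 2 + y ^ 2)).

Lemma polar_arg_spec x y : 0 < x ^ 2 + y ^ 2 ->
  x = sqrt (x ^ 2 + y ^ 2) * cos (polar_arg x y) /\
  y = sqrt (x ^ 2 + y ^ 2) * sin (polar_arg x y) /\
  - PI <= polar_arg x y <= PI.
Proof.
  intros H. set (r := sqrt (x ^ 2 + y ^ 2)).
  assert (Hr : 0 < r) by (apply sqrt_lt_R0; auto).
  assert (Hr2 : r * r = x ^ 2 + y ^ 2) by (apply sqrt_sqrt; lra).
  assert (Hb : -1 <= x / r <= 1).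
  { assert (Hsq : (x / r) * (x / r) <= 1).
    { replace ((x / r) * (x / r)) with (x * x / (r * r)) by (field; lra). rewrite Hr2.
      apply Rmult_le_reg_r with (x ^ 2 + y ^ 2); auto. field_simplify; [|lra].
      pose proof (pow2_ge_0 y). simpl; lra. }
    split; nra. }
  assert (Hs : sqrt (1 - (x / r)²) = Rabs y / r).
  { replace (1 - (x / r)²) with ((Rabs y / r)²).
    - apply sqrt_Rsqr. apply Rmult_le_pos; [apply Rabs_pos | left; apply Rinv_0_lt_compat; lra].
    - unfold Rsqr.
      replace (Rabs y / r * (Rabs y / r)) with (Rabs y * Rabs y / (r * r)) by (field; lra).
      replace (x / r * (x / r)) with (x * x / (r * r)) by (field; lra).
      rewrite <- Rabs_mult, Rabs_pos_eq by nra. rewrite Hr2. field. lra. }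
  pose proof (acos_bound (x / r)).
  unfold polar_arg; fold r. destruct (Rle_dec 0 y) as [Hy|Hy].
  - rewrite cos_acos, sin_acos, Hs by auto. rewrite Rabs_pos_eq by auto.
    repeat split; try (field; lra); lra.
  - rewrite cos_neg, sin_neg, cos_acos, sin_acos, Hs by auto. rewrite Rabs_left by lra.
    repeat split; try (field; lra); lra.
Qed.

Definition angle_from (u w : pt) : R := polar_arg (dot u w) (cross u w).

Definition rot (u : pt) (g : R) : pt :=
  (cos g * fst u - sin g * snd u, cos g * snd u + sin g * fst u).

Lemma dot_rot u g w : dot (rot u g) w = cos g * dot u w + sin g * cross u w.
Proof. unfold dot, cross, rot; cbn [fst snd]; ring. Qed.

Lemma sqnorm_rot u g : sqnorm (rot u g) = sqnorm u.
Proof.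
  unfold sqnorm, rot; cbn [fst snd].
  replace ((cos g * fst u - sin g * snd u) ^ 2 + (cos g * snd u + sin g * fst u) ^ 2)
    with ((sin g ^ 2 + cos g ^ 2) * (fst u ^ 2 + snd u ^ 2)) by ring.
  replace (sin g ^ 2 + cos g ^ 2) with 1; [ring|].
  rewrite <- (sin2_cos2 g). unfold Rsqr; ring.
Qed.

Lemma angle_from_spec u w : sqnorm u = 1 -> 0 < sqnorm w ->
  dot u w = sqrt (sqnorm w) * cos (angle_from u w) /\
  cross u w = sqrt (sqnorm w) * sin (angle_from u w) /\
  - PI <= angle_from u w <= PI.
Proof.
  intros Hu Hw. assert (E : dot u w ^ 2 + cross u w ^ 2 = sqnorm w)
    by (rewrite <- lagrange_identity, Hu; ring).
  rewrite <- E in *. apply polar_arg_spec; auto.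
Qed.

Lemma dot_rot_polar u g w : sqnorm u = 1 -> 0 < sqnorm w ->
  dot (rot u g) w = sqrt (sqnorm w) * cos (angle_from u w - g).
Proof.
  intros Hu Hw. destruct (angle_from_spec u w Hu Hw) as [Hx [Hy _]].
  rewrite dot_rot, Hx, Hy, cos_minus. ring.
Qed.

Lemma vector_polar u w : sqnorm u = 1 -> 0 < sqnorm w ->
  w = scale (sqrt (sqnorm w)) (rot u (angle_from u w)).
Proof.
  intros Hu Hw. destruct (angle_from_spec u w Hu Hw) as [Hx [Hy _]].
  set (r := sqrt (sqnorm w)) in *. set (t := angle_from u w) in *.
  unfold scale, rot; cbn [fst snd].
  replace (r * (cos t * fst u - sin t * snd u))
    with (fst u * (r * cos t) - snd u * (r * sin t)) by ring.
  replace (r * (cos t * snd u + sin t * fst u))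
    with (snd u * (r * cos t) + fst u * (r * sin t)) by ring.
  rewrite <- Hx, <- Hy. unfold sqnorm, dot, cross in *. destruct w as [w1 w2]; cbn [fst snd].
  f_equal; [transitivity ((fst u ^ 2 + snd u ^ 2) * w1)
           | transitivity ((fst u ^ 2 + snd u ^ 2) * w2)]; try (rewrite Hu; ring); ring.
Qed.

Lemma vec_angle_polar u w w' : sqnorm u = 1 -> 0 < sqnorm w -> 0 < sqnorm w' ->
  Rabs (angle_from u w - angle_from u w') <= PI ->
  vec_angle w w' = Rabs (angle_from u w - angle_from u w').
Proof.
  intros Hu Hw Hw' Hd.
  destruct (angle_from_spec u w Hu Hw) as [X1 [Y1 _]].
  destruct (angle_from_spec u w' Hu Hw') as [X2 [Y2 _]].
  assert (Hdot : dot w w' = dot u w * dot u w' + cross u w * cross u w')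
    by (rewrite dot_cross_frame, Hu; ring).
  change (acos (dot w w' / (sqrt (sqnorm w) * sqrt (sqnorm w')))
          = Rabs (angle_from u w - angle_from u w')).
  rewrite Hdot, X1, Y1, X2, Y2.
  set (r := sqrt (sqnorm w)). set (r' := sqrt (sqnorm w')).
  assert (0 < r) by (apply sqrt_lt_R0; auto). assert (0 < r') by (apply sqrt_lt_R0; auto).
  replace ((r * cos (angle_from u w) * (r' * cos (angle_from u w')) +
            r * sin (angle_from u w) * (r' * sin (angle_from u w'))) / (r * r'))
    with (cos (angle_from u w - angle_from u w')) by (rewrite cos_minus; field; lra).
  destruct (Rle_or_lt 0 (angle_from u w - angle_from u w')).
  - rewrite Rabs_pos_eq in * by auto. apply acos_cos; lra.
  - rewrite Rabs_left in * by auto. rewrite <- cos_neg. apply acos_cos; lra.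
Qed.

Lemma vec_angle_opposite w k : 0 < sqnorm w -> 0 < k -> vec_angle w (scale (- k) w) = PI.
Proof.
  intros Hw Hk.
  change (acos (dot w (scale (- k) w) / (sqrt (sqnorm w) * sqrt (sqnorm (scale (- k) w)))) = PI).
  rewrite sqnorm_scale. replace (- k * - k) with (k * k) by ring.
  rewrite sqrt_mult, sqrt_square by (nra || apply sqnorm_nonneg).
  set (r := sqrt (sqnorm w)).
  assert (0 < r) by (apply sqrt_lt_R0; auto).
  assert (Hr2 : r * r = sqnorm w) by (apply sqrt_sqrt; lra).
  replace (dot w (scale (- k) w) / (r * (k * r))) with (Ropp 1).
  - rewrite acos_opp, acos_1; ring.
  - replace (dot w (scale (- k) w)) with (- k * (r * r))
      by (rewrite Hr2; unfold dot, scale, sqnorm; cbn [fst snd]; ring).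
    field; lra.
Qed.

Lemma rot_sin_relation u a b c :
  sin (b - c) * fst (rot u a) + sin (c - a) * fst (rot u b) + sin (a - b) * fst (rot u c) = 0 /\
  sin (b - c) * snd (rot u a) + sin (c - a) * snd (rot u b) + sin (a - b) * snd (rot u c) = 0.
Proof. unfold rot; cbn [fst snd]; rewrite !sin_minus; split; ring. Qed.

Lemma cos_nonneg_inv x : - (3 * (PI / 2)) < x < 3 * (PI / 2) -> 0 <= cos x ->
  - (PI / 2) <= x <= PI / 2.
Proof.
  intros [H1 H2] H. split.
  - apply Rnot_lt_le. intros Hx. rewrite <- cos_neg in H. pose proof (cos_lt_0 (- x)). lra.
  - apply Rnot_lt_le. intros Hx. pose proof (cos_lt_0 x). lra.
Qed.

Lemma halfplane_angle_bound u g w : sqnorm u = 1 -> 0 < sqnorm w ->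
  0 <= dot (rot u g) w -> - (3 * (PI / 2)) < angle_from u w - g < 3 * (PI / 2) ->
  g - PI / 2 <= angle_from u w <= g + PI / 2.
Proof.
  intros Hu Hw Hdot Hrange. rewrite dot_rot_polar in Hdot by auto.
  assert (Hr : 0 < sqrt (sqnorm w)) by (apply sqrt_lt_R0; auto).
  assert (Hcos : 0 <= cos (angle_from u w - g)).
  { apply Rnot_lt_le. intros Hneg. nra. }
  pose proof (cos_nonneg_inv _ Hrange Hcos). lra.
Qed.

Lemma dot_add_rot u g w :
  dot u w + dot (rot u g) w = 2 * cos (g / 2) * dot (rot u (g / 2)) w.
Proof.
  rewrite !dot_rot. replace g with (2 * (g / 2)) at 1 2 by field.
  rewrite cos_2a_cos, sin_2a. ring.
Qed.

Definition normalize (w : pt) : pt := scale (/ sqrt (sqnorm w)) w.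

Lemma normalize_spec w : 0 < sqnorm w ->
  sqnorm (normalize w) = 1 /\ w = scale (sqrt (sqnorm w)) (normalize w).
Proof.
  intros Hw. assert (Hr : 0 < sqrt (sqnorm w)) by (apply sqrt_lt_R0; auto).
  assert (Hr2 : sqrt (sqnorm w) * sqrt (sqnorm w) = sqnorm w) by (apply sqrt_sqrt; lra).
  unfold normalize. rewrite sqnorm_scale. split.
  - rewrite <- Hr2 at 3. field; lra.
  - unfold scale; destruct w; cbn [fst snd]; f_equal; field; lra.
Qed.

Lemma angle_from_self u s : sqnorm u = 1 -> 0 < s -> angle_from u (scale s u) = 0.
Proof.
  intros Hu Hs. unfold angle_from, polar_arg.
  replace (cross u (scale s u)) with 0 by (unfold cross, scale; cbn [fst snd]; ring).
  replace (dot u (scale s u)) with s by (unfold dot, scale, sqnorm in *; cbn [fst snd]; nra).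
  destruct (Rle_dec 0 0) as [_|]; [|lra].
  replace (s ^ 2 + 0 ^ 2) with (s * s) by ring. rewrite sqrt_square by lra.
  replace (s / s) with 1 by (field; lra). apply acos_1.
Qed.

(** * Open convex polygons *)

Definition polytope (V : list pt) : pt -> Prop := conv_hull (fun w => In w V).

Lemma polytope_vertex V w : In w V -> polytope V w.
Proof. intros Hw. apply conv_hull_single with (S := fun w => In w V). exact Hw. Qed.

Lemma list_argmin (L : list pt) (Q : pt -> Prop) (f : pt -> R) :
  (exists w, In w L /\ Q w) ->
  exists w, In w L /\ Q w /\ forall w', In w' L -> Q w' -> f w <= f w'.
Proof.
  induction L as [|a L IH]; intros [w [Hw Qw]]; [destruct Hw|].
  destruct (classic (exists w, In w L /\ Q w)) as [Hex|Hnex].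
  - destruct (IH Hex) as [m [Hm [Qm Hmin]]].
    destruct (classic (Q a /\ f a <= f m)) as [[Qa Ha]|Ha].
    + exists a. repeat split; [left; auto | auto |].
      intros w' [<-|Hw'] Qw'; [lra|]. specialize (Hmin w' Hw' Qw'); lra.
    + exists m. repeat split; [right; auto | auto |].
      intros w' [<-|Hw'] Qw'; [|auto]. apply Rnot_lt_le. intros Hlt. apply Ha; split; auto; lra.
  - destruct Hw as [->|Hw]; [|exfalso; apply Hnex; eauto].
    exists w. repeat split; [left; auto | auto |].
    intros w' [<-|Hw'] Qw'; [lra|]. exfalso; apply Hnex; eauto.
Qed.

Lemma list_extremes (L : list pt) (Q : pt -> Prop) (f : pt -> R) :
  (exists w, In w L /\ Q w) ->
  exists wmin wmax, In wmin L /\ Q wmin /\ In wmax L /\ Q wmax /\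
    forall w, In w L -> Q w -> f wmin <= f w <= f wmax.
Proof.
  intros Hne.
  destruct (list_argmin L Q f Hne) as [wmin [Hmin [Qmin Hle]]].
  destruct (list_argmin L Q (fun w => - f w) Hne) as [wmax [Hmax [Qmax Hge]]].
  exists wmin, wmax. do 4 (split; [auto|]).
  intros w Hw Qw. specialize (Hge w Hw Qw). split; [apply Hle; auto | lra].
Qed.

Section OpenPolygon.
Variables (V : list pt) (P : pt -> Prop).
Hypothesis HP : forall x, P x <-> Defs.interior (polytope V) x.

Lemma polygon_incl_polytope x : P x -> polytope V x.
Proof. intros H; apply HP in H; apply interior_incl in H; auto. Qed.

Lemma polygon_seg x y t : P x -> P y -> 0 <= t <= 1 -> P (seg x y t).
Proof.
  intros Hx Hy Ht. apply HP in Hx as [e1 [He1 H1]]. apply HP in Hy as [e2 [He2 H2]].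
  apply HP. exists (Rmin e1 e2). split; [apply Rmin_pos; auto|]. intros q Hq.
  set (d := vsub q (seg x y t)).
  assert (Hshift : forall a, edist a (fst a + fst d, snd a + snd d) = edist (seg x y t) q).
  { intros a. rewrite (edist_scale _ _ (seg x y t) q 1); [ring | lra |].
    unfold d, vsub, scale; cbn; f_equal; ring. }
  assert (Ea : polytope V (fst x + fst d, snd x + snd d)).
  { apply H1. rewrite Hshift. pose proof (Rmin_l e1 e2). lra. }
  assert (Eb : polytope V (fst y + fst d, snd y + snd d)).
  { apply H2. rewrite Hshift. pose proof (Rmin_r e1 e2). lra. }
  replace q with (seg (fst x + fst d, snd x + snd d) (fst y + fst d, snd y + snd d) t).
  - apply conv_hull_seg; auto.
  - unfold d, seg, vsub; destruct q; cbn; f_equal; ring.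
Qed.

Lemma closure_polygon_halfplane g c v :
  (forall w, In w V -> c <= dot g (vsub w v)) ->
  forall x, closure P x -> c <= dot g (vsub x v).
Proof.
  intros HV. apply closure_halfplane. intros x Hx.
  apply (conv_hull_halfplane (fun w => In w V)); auto. apply polygon_incl_polytope; auto.
Qed.

Variable x0 : pt.
Hypothesis Hx0 : P x0.

Lemma polytope_incl_closure w : polytope V w -> closure P w.
Proof.
  intros Hw eps Heps. apply HP in Hx0 as [e [He Hb]].
  set (D := edist w x0). assert (HD : 0 <= D) by apply edist_nonneg.
  set (t := Rmin (1/2) (eps / (D + 1))).
  assert (Ht0 : 0 < t) by (apply Rmin_pos; [lra | apply Rdiv_lt_0_compat; lra]).
  assert (Ht1 : t <= 1/2) by apply Rmin_l.
  assert (Ht2 : t <= eps / (D + 1)) by apply Rmin_r.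
  exists (seg w x0 t). split.
  - (* the ball of radius e around x0 shrinks towards w to a ball of radius t e *)
    apply HP. exists (t * e). split; [nra|]. intros q Hq.
    set (q' := (fst w + (fst q - fst w) / t, snd w + (snd q - snd w) / t)).
    assert (Hq' : polytope V q').
    { apply Hb. rewrite (edist_scale x0 q' (seg w x0 t) q (/ t)).
      - apply Rmult_lt_reg_l with t; auto. rewrite <- Rmult_assoc, Rinv_r, Rmult_1_l by lra. lra.
      - left; apply Rinv_0_lt_compat; auto.
      - unfold q', seg, vsub, scale; cbn; f_equal; field; lra. }
    replace q with (seg w q' t).
    + apply conv_hull_seg; auto; lra.
    + unfold q', seg; destruct q; cbn; f_equal; field; lra.
  - rewrite (edist_scale w _ w x0 t); [| lra | unfold seg, vsub, scale; cbn; f_equal; ring].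
    fold D. apply Rle_lt_trans with (eps / (D + 1) * D); [apply Rmult_le_compat_r; auto|].
    apply Rmult_lt_reg_l with (D + 1); [lra|]. field_simplify; [|lra]. nra.
Qed.

Lemma vertices_not_on_line g v :
  0 < sqnorm g -> ~ (forall w, In w V -> dot g (vsub w v) = 0).
Proof.
  intros Hg Hall. apply HP in Hx0 as [e [He Hb]].
  set (t := e / (2 * sqrt (sqnorm g))).
  assert (HG : 0 < sqrt (sqnorm g)) by (apply sqrt_lt_R0; auto).
  assert (Ht : 0 < t) by (apply Rdiv_lt_0_compat; lra).
  assert (C1 : polytope V x0) by (apply Hb; rewrite edist_refl; auto).
  assert (C2 : polytope V (fst x0 + t * fst g, snd x0 + t * snd g)).
  { apply Hb.
    rewrite (edist_scale _ _ (0, 0) g t); [| lra | unfold vsub, scale; cbn; f_equal; ring].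
    replace (edist (0, 0) g) with (sqrt (sqnorm g))
      by (rewrite edist_sqnorm; f_equal; unfold sqnorm, vsub; cbn; ring).
    unfold t. replace (e / (2 * sqrt (sqnorm g)) * sqrt (sqnorm g)) with (e / 2) by (field; lra).
    lra. }
  assert (Hzero : forall x, polytope V x -> dot g (vsub x v) = 0).
  { intros x Hx. apply Rle_antisym.
    - assert (0 <= dot (scale (-1) g) (vsub x v)); [|unfold dot, scale in *; cbn in *; lra].
      apply (conv_hull_halfplane (fun w => In w V)); auto. intros w Hw.
      specialize (Hall w Hw). unfold dot, scale in *; cbn in *; lra.
    - apply (conv_hull_halfplane (fun w => In w V)); auto. intros w Hw; rewrite Hall; auto; lra. }
  pose proof (Hzero _ C1) as Z1. pose proof (Hzero _ C2) as Z2.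
  rewrite dot_vsub in Z1, Z2. unfold dot, sqnorm in *; cbn in *. nra.
Qed.

Variable v : pt.
Hypothesis Hv : is_vertex P v.

Lemma vertex_cone_pointed p q r l m n :
  polytope V p -> polytope V q -> polytope V r -> p <> v ->
  0 < l -> 0 <= m -> 0 <= n ->
  l * fst (vsub p v) + m * fst (vsub q v) + n * fst (vsub r v) = 0 ->
  l * snd (vsub p v) + m * snd (vsub q v) + n * snd (vsub r v) = 0 -> False.
Proof.
  intros Hp Hq Hr Hpv Hl Hm Hn E1 E2. unfold vsub in E1, E2; cbn in E1, E2.
  destruct (Rle_lt_or_eq_dec 0 (m + n) ltac:(lra)) as [Hmn|Hmn].
  - (* v lies strictly inside the segment from p to a point of the segment [q, r] *)
    set (q' := seg q r (n / (m + n))).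
    assert (Hq' : polytope V q').
    { apply conv_hull_seg; auto. split.
      - unfold Rdiv; apply Rmult_le_pos; [lra | left; apply Rinv_0_lt_compat; lra].
      - apply Rmult_le_reg_r with (m + n); auto. field_simplify; lra. }
    destruct Hv as [_ Hext].
    destruct (Hext p q' ((m + n) / (l + m + n)) (polytope_incl_closure _ Hp)
                (polytope_incl_closure _ Hq')) as [Epv _].
    + split; [apply Rdiv_lt_0_compat; lra|].
      apply Rmult_lt_reg_r with (l + m + n); [lra|]. field_simplify; lra.
    + unfold q', seg; destruct v as [v1 v2]; cbn in *.
      f_equal; apply Rmult_eq_reg_r with (l + m + n); (field_simplify; [lra | lra..]) || lra.
    + contradiction.
  - apply Hpv. assert (m = 0) by lra. assert (n = 0) by lra. subst m n.
    destruct p, v; cbn in *. f_equal; nra.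
Qed.

Lemma vertex_not_in_polygon : ~ P v.
Proof.
  intros Hpv. pose proof Hpv as Hin. apply HP in Hpv as [e [He Hb]].
  set (a := (fst v - e / 2, snd v)). set (b := (fst v + e / 2, snd v)).
  assert (Hab : forall z, fst z - fst v = e / 2 \/ fst z - fst v = - (e / 2) ->
                snd z = snd v -> polytope V z).
  { intros z Hz1 Hz2. apply Hb. rewrite edist_sqnorm.
    replace (sqnorm (vsub v z)) with ((e / 2) * (e / 2)); [rewrite sqrt_square; lra|].
    unfold sqnorm, vsub; cbn. rewrite Hz2, Rminus_diag.
    destruct Hz1; [replace (fst v - fst z) with (- (e / 2)) by lra
                  | replace (fst v - fst z) with (e / 2) by lra]; ring. }
  apply (vertex_cone_pointed a b b 1 1 0); unfold a, b, vsub; cbn; try lra.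
  - apply Hab; cbn; auto; lra.
  - apply Hab; cbn; auto; lra.
  - apply Hab; cbn; auto; lra.
  - intros E. apply (f_equal fst) in E. cbn in E. lra.
Qed.

Lemma exists_vertex_neq : exists w, In w V /\ w <> v.
Proof.
  apply NNPP. intros Hn. apply (vertices_not_on_line (1, 0) v).
  { unfold sqnorm; cbn [fst snd]; lra. }
  intros w Hw. destruct (classic (w = v)) as [->|Hne].
  - unfold dot, vsub; cbn [fst snd]; ring.
  - exfalso; apply Hn; eauto.
Qed.

Lemma vertex_cone_pointed_polar u p q r l m n :
  sqnorm u = 1 -> polytope V p -> polytope V q -> polytope V r ->
  p <> v -> q <> v -> r <> v -> 0 < l -> 0 <= m -> 0 <= n ->
  l * fst (rot u (angle_from u (vsub p v))) + m * fst (rot u (angle_from u (vsub q v)))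
    + n * fst (rot u (angle_from u (vsub r v))) = 0 ->
  l * snd (rot u (angle_from u (vsub p v))) + m * snd (rot u (angle_from u (vsub q v)))
    + n * snd (rot u (angle_from u (vsub r v))) = 0 -> False.
Proof.
  intros Hu Hp Hq Hr Hpv Hqv Hrv Hl Hm Hn E1 E2.
  pose proof (vector_polar u _ Hu (sqnorm_vsub_pos p v Hpv)) as Pp.
  pose proof (vector_polar u _ Hu (sqnorm_vsub_pos q v Hqv)) as Pq.
  pose proof (vector_polar u _ Hu (sqnorm_vsub_pos r v Hrv)) as Pr.
  pose proof (sqrt_lt_R0 _ (sqnorm_vsub_pos p v Hpv)) as Rp.
  pose proof (sqrt_lt_R0 _ (sqnorm_vsub_pos q v Hqv)) as Rq.
  pose proof (sqrt_lt_R0 _ (sqnorm_vsub_pos r v Hrv)) as Rr.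
  set (rp := sqrt (sqnorm (vsub p v))) in *.
  set (rq := sqrt (sqnorm (vsub q v))) in *.
  set (rr := sqrt (sqnorm (vsub r v))) in *.
  apply (vertex_cone_pointed p q r (l / rp) (m / rq) (n / rr)); auto.
  - apply Rdiv_lt_0_compat; auto.
  - unfold Rdiv; apply Rmult_le_pos; [auto | left; apply Rinv_0_lt_compat; auto].
  - unfold Rdiv; apply Rmult_le_pos; [auto | left; apply Rinv_0_lt_compat; auto].
  - rewrite Pp, Pq, Pr at 1. unfold scale; cbn [fst]. rewrite <- E1. field; lra.
  - rewrite Pp, Pq, Pr at 1. unfold scale; cbn [snd]. rewrite <- E2. field; lra.
Qed.

Section VertexCone.
Variable u0 : pt.
Hypothesis Hu0 : sqnorm u0 = 1.
Hypothesis Hx0v : x0 <> v.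
Hypothesis Hx0_angle : angle_from u0 (vsub x0 v) = 0.

Let th (w : pt) : R := angle_from u0 (vsub w v).

Lemma vertex_angle_open w : In w V -> w <> v -> - PI < th w < PI.
Proof.
  intros Hw Hwv.
  destruct (angle_from_spec u0 _ Hu0 (sqnorm_vsub_pos _ _ Hwv)) as [_ [_ Hr]].
  fold (th w) in Hr. apply NNPP. intros Hpi.
  assert (Hcs : cos (th w) = -1 /\ sin (th w) = 0).
  { destruct (Req_dec (th w) PI) as [->|Hne]; [split; [apply cos_PI | apply sin_PI]|].
    replace (th w) with (- PI) by lra. rewrite cos_neg, sin_neg, cos_PI, sin_PI. split; ring. }
  (* otherwise v would lie strictly between w and x0 *)
  apply (vertex_cone_pointed_polar u0 w x0 x0 1 1 0); auto using polytope_vertex,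
    polygon_incl_polytope; try lra;
    fold (th w); rewrite Hx0_angle; unfold rot; cbn [fst snd];
    rewrite (proj1 Hcs), (proj2 Hcs), cos_0, sin_0; ring.
Qed.

Lemma vertex_angle_span wj wk : In wj V -> wj <> v -> In wk V -> wk <> v ->
  th wk - th wj < PI.
Proof.
  intros Hj Hjv Hk Hkv. apply Rnot_le_lt. intros Hge.
  pose proof (vertex_angle_open wj Hj Hjv). pose proof (vertex_angle_open wk Hk Hkv).
  destruct (rot_sin_relation u0 (th wj) (th wk) 0) as [R1 R2].
  (* the directions of wj, wk and x0 would not lie in an open half-plane *)
  apply (vertex_cone_pointed_polar u0 wj wk x0 (sin (th wk - 0)) (sin (0 - th wj))
           (sin (th wj - th wk))); auto using polytope_vertex, polygon_incl_polytope.
  - rewrite Rminus_0_r. apply sin_gt_0; lra.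
  - apply sin_ge_0; lra.
  - replace (th wj - th wk) with (- (th wk - th wj)) by ring. rewrite sin_neg.
    assert (sin (th wk - th wj) <= 0) by (apply sin_le_0; lra). lra.
  - rewrite Hx0_angle. exact R1.
  - rewrite Hx0_angle. exact R2.
Qed.

End VertexCone.

Lemma vertex_supporting_direction :
  exists u, sqnorm u = 1 /\ forall x, closure P x -> 0 <= dot u (vsub x v).
Proof.
  assert (Hx0v : x0 <> v) by (intros E; apply vertex_not_in_polygon; rewrite <- E; exact Hx0).
  destruct (normalize_spec _ (sqnorm_vsub_pos _ _ Hx0v)) as [Hu0 Ex0].
  set (u0 := normalize (vsub x0 v)) in *.
  assert (Hx0_angle : angle_from u0 (vsub x0 v) = 0).
  { rewrite Ex0. apply angle_from_self; auto. apply sqrt_lt_R0, sqnorm_vsub_pos; auto. }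
  set (th w := angle_from u0 (vsub w v)).
  destruct (list_extremes V (fun w => w <> v) th exists_vertex_neq)
    as [wj [wk [Hj [Hjv [Hk [Hkv Hext]]]]]].
  assert (Hspan : th wk - th wj < PI)
    by exact (vertex_angle_span u0 Hu0 Hx0v Hx0_angle wj wk Hj Hjv Hk Hkv).
  exists (rot u0 ((th wj + th wk) / 2)). split; [rewrite sqnorm_rot; auto|].
  apply closure_polygon_halfplane. intros w Hw.
  destruct (classic (w = v)) as [->|Hwv]; [unfold dot, vsub; cbn [fst snd]; lra|].
  rewrite dot_rot_polar by (auto; apply sqnorm_vsub_pos; auto). fold (th w).
  destruct (Hext w Hw Hwv).
  apply Rmult_le_pos; [apply sqrt_pos | apply cos_ge_0; lra].
Qed.

End OpenPolygon.

(** * Nearest points of convex sets *)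

Definition cv_pt (p : nat -> pt) (l : pt) : Prop :=
  Un_cv (fun n => fst (p n)) (fst l) /\ Un_cv (fun n => snd (p n)) (snd l).

Lemma Un_cv_const c : Un_cv (fun _ => c) c.
Proof. intros e He. exists 0%nat. intros. unfold Rdist. rewrite Rminus_diag, Rabs_R0. lra. Qed.

Lemma Un_cv_affine a l c0 c1 : Un_cv a l -> Un_cv (fun n => c0 + c1 * a n) (c0 + c1 * l).
Proof.
  intros H. apply CV_plus; [apply Un_cv_const | apply CV_mult; [apply Un_cv_const | auto]].
Qed.

Lemma Un_cv_sqnorm_vsub_seg p l z t v : cv_pt p l ->
  Un_cv (fun n => sqnorm (vsub (seg (p n) z t) v)) (sqnorm (vsub (seg l z t) v)).
Proof.
  intros [H1 H2].
  assert (C1 : Un_cv (fun n => fst (vsub (seg (p n) z t) v)) (fst (vsub (seg l z t) v))).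
  { apply (Un_cv_ext (fun n => t * fst z - fst v + (1 - t) * fst (p n))).
    - intros n. unfold vsub, seg; cbn [fst snd]. ring.
    - replace (fst (vsub (seg l z t) v)) with (t * fst z - fst v + (1 - t) * fst l)
        by (unfold vsub, seg; cbn [fst snd]; ring).
      apply Un_cv_affine; auto. }
  assert (C2 : Un_cv (fun n => snd (vsub (seg (p n) z t) v)) (snd (vsub (seg l z t) v))).
  { apply (Un_cv_ext (fun n => t * snd z - snd v + (1 - t) * snd (p n))).
    - intros n. unfold vsub, seg; cbn [fst snd]. ring.
    - replace (snd (vsub (seg l z t) v)) with (t * snd z - snd v + (1 - t) * snd l)
        by (unfold vsub, seg; cbn [fst snd]; ring).
      apply Un_cv_affine; auto. }
  unfold sqnorm. simpl.
  apply CV_plus; apply CV_mult; auto; apply CV_mult; auto; apply Un_cv_const.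
Qed.

Lemma Un_cv_sqnorm_vsub p l v : cv_pt p l ->
  Un_cv (fun n => sqnorm (vsub (p n) v)) (sqnorm (vsub l v)).
Proof.
  intros Hp. apply (Un_cv_ext (fun n => sqnorm (vsub (seg (p n) v 0) v))).
  - intros n. f_equal. unfold vsub, seg; cbn [fst snd]; f_equal; ring.
  - replace (vsub l v) with (vsub (seg l v 0) v)
      by (unfold vsub, seg; cbn [fst snd]; f_equal; ring).
    apply Un_cv_sqnorm_vsub_seg; auto.
Qed.

Lemma cauchy_of_null_bound (a e : nat -> R) :
  Un_cv e 0 -> (forall n m, (a n - a m) ^ 2 <= e n + e m) -> Cauchy_crit a.
Proof.
  intros He Hb eps Heps. destruct (He (eps * eps / 2)) as [N HN]; [nra|].
  exists N. intros n m Hn Hm. unfold Rdist in *.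
  specialize (HN n Hn) as Hen. specialize (HN m Hm) as Hem. rewrite Rminus_0_r in Hen, Hem.
  apply Rabs_def2 in Hen, Hem. specialize (Hb n m).
  apply Rsqr_incrst_0; [| apply Rabs_pos | lra]. rewrite <- Rsqr_abs. unfold Rsqr.
  simpl in Hb. lra.
Qed.

Lemma cv_pt_of_null_bound (p : nat -> pt) (e : nat -> R) :
  Un_cv e 0 -> (forall n m, sqnorm (vsub (p n) (p m)) <= e n + e m) -> exists l, cv_pt p l.
Proof.
  intros He Hb.
  assert (C1 : Cauchy_crit (fun n => fst (p n))).
  { apply (cauchy_of_null_bound _ e He). intros n m. specialize (Hb n m).
    unfold sqnorm, vsub in Hb; cbn [fst snd] in Hb.
    pose proof (pow2_ge_0 (snd (p n) - snd (p m))). lra. }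
  assert (C2 : Cauchy_crit (fun n => snd (p n))).
  { apply (cauchy_of_null_bound _ e He). intros n m. specialize (Hb n m).
    unfold sqnorm, vsub in Hb; cbn [fst snd] in Hb.
    pose proof (pow2_ge_0 (fst (p n) - fst (p m))). lra. }
  destruct (R_complete _ C1) as [l1 H1]. destruct (R_complete _ C2) as [l2 H2].
  exists (l1, l2). split; auto.
Qed.

Lemma nonneg_of_quadratic_nonneg g q :
  (forall t, 0 < t <= 1 -> 0 <= 2 * t * g + t * t * q) -> 0 <= q -> 0 <= g.
Proof.
  intros H Hq. apply Rnot_lt_le. intros Hg.
  set (t := Rmin 1 (- g / (q + 1))).
  assert (Ht0 : 0 < t) by (apply Rmin_pos; [lra | apply Rdiv_lt_0_compat; lra]).
  assert (Ht1 : t <= 1) by apply Rmin_l.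
  assert (Ht2 : t * (q + 1) <= - g).
  { apply Rle_trans with (- g / (q + 1) * (q + 1)).
    - apply Rmult_le_compat_r; [lra | apply Rmin_r].
    - right; field; lra. }
  specialize (H t (conj Ht0 Ht1)). nra.
Qed.

Section NearestPoint.
Variables (S : pt -> Prop) (v : pt) (h : R).
Hypothesis Hh : 0 < h.
Hypothesis HS : forall x y t, S x -> S y -> 0 <= t <= 1 -> S (seg x y t).
Hypothesis Hlow : forall y, S y -> h <= edist v y.
Hypothesis Happ : forall eps, 0 < eps -> exists y, S y /\ edist v y < h + eps.

Lemma sqnorm_lower y : S y -> h * h <= sqnorm (vsub y v).
Proof. intros Hy. rewrite <- edist_sqr, edist_sym. pose proof (Hlow y Hy). nra. Qed.

Lemma minimizing_sequence_cv : exists (y : nat -> pt) (dl : nat -> R) (y0 : pt),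
  (forall n, S (y n)) /\ Un_cv dl 0 /\ (forall n, sqnorm (vsub (y n) v) < h * h + dl n) /\
  cv_pt y y0.
Proof.
  set (rho n := / (INR n + 1)).
  assert (Hrho : forall n, 0 < rho n) by (intros; apply RinvN_pos).
  assert (Hseq : forall n, exists y, S y /\ edist v y < h + rho n) by (intros; apply Happ; auto).
  destruct (choice _ Hseq) as [y Hy].
  set (dl n := rho n * (2 * h + rho n)).
  assert (Hdl : Un_cv dl 0).
  { replace 0 with (0 * (2 * h + 0)) by ring.
    apply CV_mult; [exact RinvN_cv | apply CV_plus; [apply Un_cv_const | exact RinvN_cv]]. }
  assert (Hnear : forall n, sqnorm (vsub (y n) v) < h * h + dl n).
  { intros n. destruct (Hy n) as [Sn Dn]. rewrite <- edist_sqr, edist_sym.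
    pose proof (Hlow _ Sn). unfold dl. nra. }
  destruct (cv_pt_of_null_bound y (fun n => 2 * dl n)) as [y0 Hy0].
  - replace 0 with (2 * 0) by ring. apply CV_mult; [apply Un_cv_const | auto].
  - (* parallelogram law: the midpoint of y n and y m is at least h away from v *)
    intros n m. destruct (Hy n) as [Sn _]. destruct (Hy m) as [Sm _].
    pose proof (sqnorm_lower _ (HS _ _ (1/2) Sn Sm ltac:(lra))).
    pose proof (Hnear n). pose proof (Hnear m).
    assert (sqnorm (vsub (y n) (y m)) = 2 * sqnorm (vsub (y n) v) + 2 * sqnorm (vsub (y m) v)
              - 4 * sqnorm (vsub (seg (y n) (y m) (1/2)) v))
      by (unfold sqnorm, vsub, seg; cbn [fst snd]; field).
    lra.
  - exists y, dl, y0. split; [intros n; apply Hy | auto].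
Qed.

Lemma exists_nearest_point :
  exists y0, h * h <= sqnorm (vsub y0 v) /\
    forall z, S z -> 0 <= dot (vsub y0 v) (vsub z y0).
Proof.
  destruct minimizing_sequence_cv as [y [dl [y0 [HyS [Hdl [Hnear Hy0]]]]]].
  assert (Hlim : forall z t, S z -> 0 <= t <= 1 ->
    sqnorm (vsub y0 v) <= sqnorm (vsub (seg y0 z t) v)).
  { intros z t Sz Ht.
    apply Rle_cv_lim with (Un := fun n => sqnorm (vsub (y n) v) - dl n)
      (Vn := fun n => sqnorm (vsub (seg (y n) z t) v)).
    - intros n. pose proof (sqnorm_lower _ (HS _ _ t (HyS n) Sz Ht)). pose proof (Hnear n). lra.
    - replace (sqnorm (vsub y0 v)) with (sqnorm (vsub y0 v) - 0) by ring.
      apply CV_minus; auto. apply Un_cv_sqnorm_vsub; auto.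
    - apply Un_cv_sqnorm_vsub_seg; auto. }
  exists y0. split.
  - apply Rle_cv_lim with (Un := fun _ => h * h) (Vn := fun n => sqnorm (vsub (y n) v)).
    + intros n; apply sqnorm_lower, HyS.
    + apply Un_cv_const.
    + apply Un_cv_sqnorm_vsub; auto.
  - (* first-order optimality of y0 along the segment towards z *)
    intros z Sz. apply (nonneg_of_quadratic_nonneg _ (sqnorm (vsub z y0))); [|apply sqnorm_nonneg].
    intros t Ht. pose proof (Hlim z t Sz ltac:(lra)).
    assert (sqnorm (vsub (seg y0 z t) v) - sqnorm (vsub y0 v)
            = 2 * t * dot (vsub y0 v) (vsub z y0) + t * t * sqnorm (vsub z y0))
      by (unfold sqnorm, dot, vsub, seg; cbn [fst snd]; ring).
    lra.
Qed.

Lemma convex_supporting_direction :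
  exists u, sqnorm u = 1 /\ forall z, S z -> h <= dot u (vsub z v).
Proof.
  destruct exists_nearest_point as [y0 [Hfar Hvar]].
  assert (Hpos : 0 < sqnorm (vsub y0 v)) by nra.
  destruct (normalize_spec _ Hpos) as [Hu Ey0].
  set (r := sqrt (sqnorm (vsub y0 v))) in *.
  assert (Hr : h <= r).
  { apply Rsqr_incr_0_var; [|apply sqrt_pos]. unfold Rsqr, r. rewrite sqrt_sqrt; lra. }
  set (u := normalize (vsub y0 v)) in *.
  exists u. split; auto. intros z Sz. specialize (Hvar z Sz).
  assert (E1 : fst y0 - fst v = r * fst u) by exact (f_equal fst Ey0).
  assert (E2 : snd y0 - snd v = r * snd u) by exact (f_equal snd Ey0).
  assert (Hsplit : dot u (vsub z v) = dot u (vsub z y0) + r * sqnorm u).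
  { unfold dot, vsub, sqnorm; cbn [fst snd].
    replace (fst z - fst v) with (fst z - fst y0 + r * fst u) by lra.
    replace (snd z - snd v) with (snd z - snd y0 + r * snd u) by lra. ring. }
  assert (Hvar' : 0 <= r * dot u (vsub z y0)).
  { unfold dot, vsub in *; cbn [fst snd] in *. rewrite E1, E2 in Hvar. lra. }
  assert (0 <= dot u (vsub z y0)) by nra.
  rewrite Hsplit, Hu. lra.
Qed.

End NearestPoint.

(** * The hull of two polygons at a vertex *)

Lemma halfplane_transfer (S T : pt -> Prop) n c d v : sqnorm n = 1 ->
  (forall y, S y -> c <= dot n (vsub y v)) ->
  (forall x, T x -> forall eps, 0 < eps -> exists y, S y /\ edist x y < d + eps) ->
  forall x, T x -> c - d <= dot n (vsub x v).
Proof.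
  intros Hn HS Hclose x Hx. apply Rnot_lt_le. intros Hlt.
  destruct (Hclose x Hx (c - d - dot n (vsub x v))) as [y [Hy Dy]]; [lra|].
  pose proof (HS y Hy). pose proof (unit_dot_le_edist n y x Hn). rewrite edist_sym in Dy.
  assert (dot n (vsub y v) = dot n (vsub x v) + dot n (vsub y x)) by (rewrite !dot_vsub; ring).
  lra.
Qed.

Section HullAngle.
Variables (V : list pt) (P P' : pt -> Prop) (x0 v u : pt) (h : R).
Hypothesis HP : forall x, P x <-> Defs.interior (polytope V) x.
Hypothesis Hx0 : P x0.
Hypothesis Hv : is_vertex P v.
Hypothesis Hu : sqnorm u = 1.
Hypothesis HuP : forall x, closure P x -> 0 <= dot u (vsub x v).
Hypothesis HuP' : forall z, P' z -> h <= dot u (vsub z v).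
Hypothesis HP'P : forall z, P' z -> forall eps, 0 < eps -> exists x, P x /\ edist z x < h + eps.

Let Q := conv_hull (fun x => P x \/ P' x).
Let th (x : pt) : R := angle_from u (vsub x v).

Lemma angle_from_range x : x <> v -> - PI <= th x <= PI.
Proof. intros Hxv. apply (angle_from_spec u _ Hu (sqnorm_vsub_pos _ _ Hxv)). Qed.

Lemma angle_closure_range x : closure P x -> x <> v -> - (PI / 2) <= th x <= PI / 2.
Proof.
  intros Hx Hxv. pose proof (angle_from_range x Hxv). pose proof PI_RGT_0.
  assert (Hrot : 0 <= dot (rot u 0) (vsub x v))
    by (rewrite dot_rot, cos_0, sin_0; pose proof (HuP x Hx); lra).
  apply halfplane_angle_bound in Hrot; auto using sqnorm_vsub_pos; fold (th x) in *; lra.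
Qed.

Lemma hull_bisector_halfplane g : - PI < g < PI ->
  (forall x, closure P x -> 0 <= dot (rot u g) (vsub x v)) ->
  forall x, closure Q x -> 0 <= dot (rot u (g / 2)) (vsub x v).
Proof.
  intros Hg HgP. assert (Hc : 0 < cos (g / 2)) by (apply cos_gt_0; lra).
  assert (Hsum : forall x, 0 <= dot u (vsub x v) + dot (rot u g) (vsub x v) ->
                  0 <= dot (rot u (g / 2)) (vsub x v)).
  { intros x Hx. rewrite dot_add_rot in Hx. nra. }
  apply closure_halfplane, conv_hull_halfplane. intros x [Hx|Hx]; apply Hsum.
  - pose proof (HuP x (closure_incl _ _ Hx)). pose proof (HgP x (closure_incl _ _ Hx)). lra.
  - (* points of P' lie at least h beyond the supporting line of u, and at most h outside P *)
    pose proof (HuP' x Hx).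
    pose proof (halfplane_transfer (closure P) P' (rot u g) 0 h v (eq_trans (sqnorm_rot u g) Hu)
                  HgP ltac:(intros z Hz eps He; destruct (HP'P z Hz eps He) as [y [Hy Dy]];
                            exists y; split; [apply closure_incl|]; auto) x Hx).
    lra.
Qed.

Section ExtremeVertices.
Variables wj wk : pt.
Hypotheses (Hj : In wj V) (Hjv : wj <> v) (Hk : In wk V) (Hkv : wk <> v).
Hypothesis Hext : forall w, In w V -> w <> v -> th wj <= th w <= th wk.

Lemma vertex_closure w : In w V -> closure P w.
Proof. intros Hw. apply (polytope_incl_closure V P HP x0 Hx0), polytope_vertex; auto. Qed.

Lemma extreme_angles_range : - (PI / 2) <= th wj <= th wk /\ th wk <= PI / 2.
Proof.
  pose proof (angle_closure_range wj (vertex_closure wj Hj) Hjv).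
  pose proof (angle_closure_range wk (vertex_closure wk Hk) Hkv).
  pose proof (Hext wk Hk Hkv). lra.
Qed.

Lemma lower_edge_halfplane x : closure P x -> 0 <= dot (rot u (th wj + PI / 2)) (vsub x v).
Proof.
  pose proof extreme_angles_range.
  apply (closure_polygon_halfplane V P HP). intros w Hw.
  destruct (classic (w = v)) as [->|Hwv]; [unfold dot, vsub; cbn [fst snd]; lra|].
  rewrite dot_rot_polar by (auto; apply sqnorm_vsub_pos; auto). fold (th w).
  pose proof (Hext w Hw Hwv). pose proof (angle_closure_range w (vertex_closure w Hw) Hwv).
  apply Rmult_le_pos; [apply sqrt_pos | apply cos_ge_0; lra].
Qed.

Lemma upper_edge_halfplane x : closure P x -> 0 <= dot (rot u (th wk - PI / 2)) (vsub x v).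
Proof.
  pose proof extreme_angles_range.
  apply (closure_polygon_halfplane V P HP). intros w Hw.
  destruct (classic (w = v)) as [->|Hwv]; [unfold dot, vsub; cbn [fst snd]; lra|].
  rewrite dot_rot_polar by (auto; apply sqnorm_vsub_pos; auto). fold (th w).
  pose proof (Hext w Hw Hwv). pose proof (angle_closure_range w (vertex_closure w Hw) Hwv).
  apply Rmult_le_pos; [apply sqrt_pos | apply cos_ge_0; lra].
Qed.

Lemma extreme_angles_lt : th wj < th wk.
Proof.
  destruct extreme_angles_range as [[_ Hle] _].
  destruct (Rle_lt_or_eq_dec _ _ Hle) as [|Heq]; auto. exfalso.
  (* all vertices would lie on the ray from v in direction th wj *)
  apply (vertices_not_on_line V P HP x0 Hx0 (rot u (th wj + PI / 2)) v).
  { rewrite sqnorm_rot, Hu; lra. }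
  intros w Hw. destruct (classic (w = v)) as [->|Hwv]; [unfold dot, vsub; cbn [fst snd]; ring|].
  rewrite dot_rot_polar by (auto; apply sqnorm_vsub_pos; auto). fold (th w).
  replace (th w - (th wj + PI / 2)) with (- (PI / 2)) by (pose proof (Hext w Hw Hwv); lra).
  rewrite cos_neg, cos_PI2. ring.
Qed.

Lemma extreme_angles_span : th wk - th wj < PI.
Proof.
  destruct extreme_angles_range as [[Hlo _] Hhi].
  apply Rnot_le_lt. intros Hge.
  (* v would lie strictly between wj and wk *)
  apply (vertex_cone_pointed_polar V P HP x0 Hx0 v Hv u wj wk wk 1 1 0);
    auto using polytope_vertex; try lra;
    fold (th wj) (th wk); replace (th wj) with (- (PI / 2)) by lra;
    replace (th wk) with (PI / 2) by lra;
    unfold rot; cbn [fst snd]; rewrite cos_neg, sin_neg, cos_PI2, sin_PI2; ring.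
Qed.

Lemma angle_closure_sector x : closure P x -> x <> v -> th wj <= th x <= th wk.
Proof.
  intros Hx Hxv. pose proof extreme_angles_range. pose proof extreme_angles_lt.
  pose proof (angle_closure_range x Hx Hxv).
  pose proof (lower_edge_halfplane x Hx) as Hlo. pose proof (upper_edge_halfplane x Hx) as Hhi.
  apply halfplane_angle_bound in Hlo; auto using sqnorm_vsub_pos; fold (th x) in *; [|lra].
  apply halfplane_angle_bound in Hhi; auto using sqnorm_vsub_pos; fold (th x) in *; [|lra].
  lra.
Qed.

Lemma polygon_angle_eq alpha : angle_at P v alpha -> alpha = th wk - th wj.
Proof.
  intros [Hub Hlub]. pose proof extreme_angles_lt. pose proof extreme_angles_span.
  apply Rle_antisym.
  - apply Hlub. intros a [x [y [Hx [Hy [Hxv [Hyv ->]]]]]].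
    pose proof (angle_closure_sector x Hx Hxv). pose proof (angle_closure_sector y Hy Hyv).
    change (vec_angle (vsub x v) (vsub y v) <= th wk - th wj).
    rewrite (vec_angle_polar u)
      by (auto using sqnorm_vsub_pos; fold (th x) (th y); apply Rabs_le; lra).
    fold (th x) (th y). apply Rabs_le; lra.
  - apply Hub. exists wk, wj. repeat split; auto using vertex_closure.
    change (th wk - th wj = vec_angle (vsub wk v) (vsub wj v)).
    rewrite (vec_angle_polar u)
      by (auto using sqnorm_vsub_pos; fold (th wj) (th wk); apply Rabs_le; lra).
    fold (th wj) (th wk). rewrite Rabs_pos_eq; lra.
Qed.

Lemma hull_angle_sector x : closure Q x -> x <> v ->
  (th wj + PI / 2) / 2 - PI / 2 <= th x <= (th wk - PI / 2) / 2 + PI / 2.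
Proof.
  intros Hx Hxv. pose proof extreme_angles_range. pose proof extreme_angles_lt.
  pose proof (angle_from_range x Hxv). pose proof PI_RGT_0.
  pose proof (hull_bisector_halfplane (th wj + PI / 2) ltac:(lra) lower_edge_halfplane x Hx) as Hlo.
  pose proof (hull_bisector_halfplane (th wk - PI / 2) ltac:(lra) upper_edge_halfplane x Hx) as Hhi.
  apply halfplane_angle_bound in Hlo; auto using sqnorm_vsub_pos; fold (th x) in *; [|lra].
  apply halfplane_angle_bound in Hhi; auto using sqnorm_vsub_pos; fold (th x) in *; [|lra].
  lra.
Qed.

End ExtremeVertices.

Lemma polygon_hull_angle_bound alpha : angle_at P v alpha ->
  alpha < PI /\
  forall a b, closure Q a -> closure Q b -> a <> v -> b <> v ->
    vec_angle (vsub a v) (vsub b v) <= (alpha + PI) / 2.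
Proof.
  intros Halpha.
  destruct (list_extremes V (fun w => w <> v) th (exists_vertex_neq V P HP x0 Hx0 v))
    as [wj [wk [Hj [Hjv [Hk [Hkv Hext]]]]]].
  rewrite (polygon_angle_eq wj wk Hj Hjv Hk Hkv Hext alpha Halpha).
  pose proof (extreme_angles_span wj wk Hj Hjv Hk Hkv Hext).
  split; [lra|]. intros a b Ha Hb Hav Hbv.
  pose proof (hull_angle_sector wj wk Hj Hjv Hk Hkv Hext a Ha Hav).
  pose proof (hull_angle_sector wj wk Hj Hjv Hk Hkv Hext b Hb Hbv).
  assert (Rabs (th a - th b) <= (th wk - th wj + PI) / 2) by (apply Rabs_le; lra).
  rewrite (vec_angle_polar u) by (auto using sqnorm_vsub_pos; fold (th a) (th b); lra).
  fold (th a) (th b). lra.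
Qed.

End HullAngle.

(** * Distances and the Hausdorff distance *)

Lemma dist_to_exists x (S : pt -> Prop) : (exists y, S y) -> exists r, dist_to x S r.
Proof.
  intros [y0 Hy0].
  destruct (completeness (fun m => exists y, S y /\ m = - edist x y)) as [m [Hub Hlub]].
  - exists 0. intros m [y [_ ->]]. pose proof (edist_nonneg x y). lra.
  - exists (- edist x y0), y0; auto.
  - exists (- m). split.
    + intros d [y [Sy ->]]. assert (- edist x y <= m) by (apply Hub; exists y; auto). lra.
    + intros r' Hr'. assert (m <= - r'); [|lra]. apply Hlub. intros z [y [Sy ->]].
      assert (r' <= edist x y) by (apply Hr'; exists y; auto). lra.
Qed.

Lemma dist_to_approx x S r : dist_to x S r ->
  forall eps, 0 < eps -> exists y, S y /\ edist x y < r + eps.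
Proof.
  intros [_ Hglb] eps He. apply NNPP. intros Hn.
  assert (r + eps <= r); [|lra]. apply Hglb. intros d [y [Sy ->]].
  apply Rnot_lt_le. intros Hlt. apply Hn; eauto.
Qed.

Lemma dist_to_lower x S r : dist_to x S r -> forall y, S y -> r <= edist x y.
Proof. intros [Hlb _] y Sy. apply Hlb. exists y; auto. Qed.

Lemma dist_to_nonneg x S r : dist_to x S r -> 0 <= r.
Proof. intros [_ Hglb]. apply Hglb. intros d [y [_ ->]]. apply edist_nonneg. Qed.

Lemma hausdorff_sym P P' h : hausdorff P P' h -> hausdorff P' P h.
Proof. intros [s1 [s2 [H1 [H2 ->]]]]. exists s2, s1. rewrite Rmax_comm. auto. Qed.

Lemma hausdorff_close P P' h : hausdorff P P' h -> (exists y, P' y) ->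
  forall x, P x -> forall eps, 0 < eps -> exists y, P' y /\ edist x y < h + eps.
Proof.
  intros [s1 [s2 [[Hub _] [_ ->]]]] HP' x Hx eps He.
  destruct (dist_to_exists x P' HP') as [r Hr].
  assert (r <= s1) by (apply Hub; exists x; auto). pose proof (Rmax_l s1 s2).
  destruct (dist_to_approx _ _ _ Hr eps He) as [y [Hy Dy]]. exists y; split; auto. lra.
Qed.

Lemma exists_separating_direction V P P' x0 v h :
  (forall x, P x <-> Defs.interior (polytope V) x) -> P x0 -> is_vertex P v ->
  (forall x y t, P' x -> P' y -> 0 <= t <= 1 -> P' (seg x y t)) -> dist_to v P' h ->
  (forall x, P x -> forall eps, 0 < eps -> exists y, P' y /\ edist x y < h + eps) ->
  (forall z, P' z -> forall eps, 0 < eps -> exists x, P x /\ edist z x < h + eps) ->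
  exists u, sqnorm u = 1 /\ (forall x, closure P x -> 0 <= dot u (vsub x v)) /\
    (forall z, P' z -> h <= dot u (vsub z v)).
Proof.
  intros HP Hx0 Hv HP' Hdist HPP' HP'P.
  destruct (Rle_lt_or_eq_dec _ _ (dist_to_nonneg _ _ _ Hdist)) as [Hpos|<-].
  - destruct (convex_supporting_direction P' v h Hpos HP' (dist_to_lower _ _ _ Hdist)
                (dist_to_approx _ _ _ Hdist)) as [u [Hu HuP']].
    exists u. repeat split; auto.
    apply closure_halfplane. intros x Hx.
    replace 0 with (h - h) by ring. apply (halfplane_transfer P' P u h h v); auto.
  - destruct (vertex_supporting_direction V P HP x0 Hx0 v Hv) as [u [Hu HuP]].
    exists u. repeat split; auto. intros z Hz.
    replace 0 with (0 - 0) by ring. apply (halfplane_transfer (closure P) P' u 0 0 v); auto.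
    intros z' Hz' eps He. destruct (HP'P z' Hz' eps He) as [x [Hx Dx]].
    exists x; split; auto. apply closure_incl; auto.
Qed.

Lemma vertex_of_angle_lt_PI (K : pt -> Prop) v c : closure K v -> c < PI ->
  (forall a b, closure K a -> closure K b -> a <> v -> b <> v ->
     vec_angle (vsub a v) (vsub b v) <= c) ->
  is_vertex K v.
Proof.
  intros Hv Hc Hangle. split; auto. intros a b t Ha Hb Ht Hseg.
  assert (Hb_of_a : a = v -> b = v).
  { intros ->. destruct b as [b1 b2], v as [v1 v2]. injection Hseg as E1 E2.
    f_equal; apply (Rmult_eq_reg_l t); lra. }
  destruct (classic (a = v)) as [Eav|Nav]; [auto|exfalso].
  assert (Nbv : b <> v).
  { intros ->. apply Nav. destruct a as [a1 a2], v as [v1 v2]. injection Hseg as E1 E2.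
    f_equal; apply (Rmult_eq_reg_l (1 - t)); lra. }
  assert (Eb : vsub b v = scale (- ((1 - t) / t)) (vsub a v)).
  { rewrite Hseg. unfold vsub, scale; cbn [fst snd]. f_equal; field; lra. }
  specialize (Hangle a b Ha Hb Nav Nbv). rewrite Eb, vec_angle_opposite in Hangle.
  - lra.
  - apply sqnorm_vsub_pos; auto.
  - apply Rdiv_lt_0_compat; lra.
Qed.

Theorem mainTheorem18 (P P' : pt -> Prop) (xc : pt) (h alpha : R) :
  open_convex_polygon P -> open_convex_polygon P' ->
  is_vertex P xc ->
  hausdorff P P' h ->
  dist_to xc P' h ->
  angle_at P xc alpha ->
  is_vertex (conv_hull (fun x => P x \/ P' x)) xc /\
  (forall beta, angle_at (conv_hull (fun x => P x \/ P' x)) xc beta ->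
     beta <= (alpha + PI) / 2) /\
  (alpha + PI) / 2 < PI.
Proof.
  intros [[V HP] [x0 Hx0]] [[V' HP'] [y0 Hy0]] Hv Hhaus Hdist Halpha.
  pose proof (hausdorff_close _ _ _ Hhaus (ex_intro _ y0 Hy0)) as HPP'.
  pose proof (hausdorff_close _ _ _ (hausdorff_sym _ _ _ Hhaus) (ex_intro _ x0 Hx0)) as HP'P.
  destruct (exists_separating_direction V P P' x0 xc h HP Hx0 Hv (polygon_seg V' P' HP')
              Hdist HPP' HP'P) as [u [Hu [HuP HuP']]].
  destruct (polygon_hull_angle_bound V P P' x0 xc u h HP Hx0 Hv Hu HuP HuP' HP'P alpha Halpha)
    as [Hlt Hbound].
  pose proof PI_RGT_0.
  split; [|split; [|lra]].
  - apply (vertex_of_angle_lt_PI _ _ ((alpha + PI) / 2)); auto; [|lra].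
    apply (closure_mono P); [intros x Hx; apply conv_hull_single; left; auto | apply Hv].
  - intros beta [_ Hlub]. apply Hlub. intros th [a [b [Ha [Hb [Hav [Hbv ->]]]]]].
    exact (Hbound a b Ha Hb Hav Hbv).
Qed.
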